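(* Let $a,b,c,k,m>0$. The system $$\frac{dx}{dt}=bx(1-x-cy),\qquad \frac{dy}{dt}=y\Big(\frac{1}{1+kx}-y-ax-mxy\Big)$$ has no limit cycle (indeed no closed trajectory) lying in the open positive quadrant $\{(x,y):x>0,y>0\}$.
   Context: All parameters are positive constants. *)

From Stdlib Require Import Reals.
Open Scope R_scope.

Definition fx (b c : R) (x y : R) : R := b * x * (1 - x - c * y).
Definition fy (a k m : R) (x y : R) : R :=
  y * (1 / (1 + k * x) - y - a * x - m * x * y).

Definition is_solution (a b c k m : R) (x y : R -> R) : Prop :=
  forall t, derivable_pt_lim x t (fx b c (x t) (y t)) /\
            derivable_pt_lim y t (fy a k m (x t) (y t)).

Definition is_closed_trajectory (a b c k m : R) (x y : R -> R) : Prop :=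
  is_solution a b c k m x y /\
  (exists T, 0 < T /\ forall t, x (t + T) = x t /\ y (t + T) = y t) /\
  (exists t1 t2, x t1 <> x t2 \/ y t1 <> y t2).

Definition in_open_quadrant (x y : R -> R) : Prop :=
  forall t, 0 < x t /\ 0 < y t.

(* Along a solution, x' = b x G and y' = y H with G = 1 - x - c y and
   H = 1/(1+kx) - y - a x - m x y.  Since dH/dx < 0 and dH/dy < 0, the
   derivative of G H is -(al G^2 + be H^2 + ga G H) with al, be > 0 and ga >= 0
   in the open quadrant.  On a periodic orbit G vanishes where x is maximal, so
   the maximum of G H over a period is nonnegative; there its derivative is
   zero, which forces G = H = 0: the orbit meets an equilibrium.  The
   derivative of G^2 + H^2 is a quadratic form in (G, H) with locally bounded
   coefficients, so by Gronwall G^2 + H^2 vanishes identically and the orbit is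
   constant. *)

From Stdlib Require Import Reals Lra.
From Coquelicot Require Import Coquelicot.
Open Scope R_scope.

Lemma derivable_pt_lim_continuity_pt f t l :
  derivable_pt_lim f t l -> continuity_pt f t.
Proof. intro Hf. apply derivable_continuous_pt. exists l. exact Hf. Qed.

Lemma derivable_pt_lim_eq_r f t l l' :
  derivable_pt_lim f t l -> l = l' -> derivable_pt_lim f t l'.
Proof. intros Hf <-. exact Hf. Qed.

Lemma periodic_max_critical f f' T :
  0 < T -> (forall t, f (t + T) = f t) ->
  (forall t, derivable_pt_lim f t (f' t)) ->
  exists c, 0 <= c <= T /\ f' c = 0 /\ forall s, 0 <= s <= T -> f s <= f c.
Proof.
  intros HT Hper Hf.
  destruct (continuity_ab_maj f 0 T) as [c [Hmax Hc]];
    [lra | intros t _; exact (derivable_pt_lim_continuity_pt _ _ _ (Hf t)) |].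
  assert (Hwide : forall s, -T < s < 2 * T -> f s <= f c).
  { intros s Hs.
    destruct (Rle_dec 0 s); [destruct (Rle_dec s T)|].
    - apply Hmax; lra.
    - replace s with (s - T + T) by ring. rewrite Hper. apply Hmax; lra.
    - rewrite <- Hper. apply Hmax; lra. }
  exists c; repeat split; try lra; [| intros s Hs; apply Hmax, Hs].
  pose (pr := exist _ (f' c) (Hf c) : derivable_pt f c).
  exact (deriv_maximum f (-T) (2 * T) c pr ltac:(lra) ltac:(lra)
           (fun s H1 H2 => Hwide s (conj H1 H2))).
Qed.

Lemma eq_of_derivable_pt_lim_0 f A B u v :
  (forall t, A <= t <= B -> derivable_pt_lim f t 0) ->
  A <= u <= B -> A <= v <= B -> f u = f v.
Proof.
  intros Hf Hu Hv.
  assert (Hle : forall p q, A <= p <= q -> q <= B -> f p = f q).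
  { intros p q Hpq HqB.
    destruct (Rle_lt_or_eq_dec p q (proj2 Hpq)) as [Hlt | <-]; [| reflexivity].
    apply eq_is_derive; [| exact Hlt].
    intros t Ht. apply is_derive_Reals, Hf. lra. }
  destruct (Rle_dec u v); [| symmetry]; apply Hle; lra.
Qed.

Lemma derivable_pt_lim_exp_weight E e l s :
  derivable_pt_lim E s e ->
  derivable_pt_lim (fun t => E t * exp (l * t)) s ((e + l * E s) * exp (l * s)).
Proof.
  intro HE. apply is_derive_Reals in HE. apply is_derive_Reals.
  auto_derive; [eexists; exact HE |].
  erewrite is_derive_unique by exact HE. ring.
Qed.

Lemma gronwall_zero E E' K A B c :
  (forall t, derivable_pt_lim E t (E' t)) -> (forall t, 0 <= E t) ->
  (forall t, A <= t <= B -> Rabs (E' t) <= K * E t) ->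
  A <= c <= B -> E c = 0 -> forall t, A <= t <= B -> E t = 0.
Proof.
  intros HE Hnonneg Hbound Hc Hc0 t Ht.
  assert (Hweight : forall l u v, u < v ->
            exists z, u < z < v /\
              E v * exp (l * v) - E u * exp (l * u)
              = (E' z + l * E z) * exp (l * z) * (v - u)).
  { intros l u v Huv.
    destruct (MVT_cor2 (fun t => E t * exp (l * t))
                (fun t => (E' t + l * E t) * exp (l * t)) u v Huv
                (fun z _ => derivable_pt_lim_exp_weight _ _ l z (HE z)))
      as [z [Hz1 Hz2]].
    exists z; split; assumption. }
  pose proof (Hnonneg t).
  destruct (Rtotal_order c t) as [Hct | [<- | Htc]]; [| exact Hc0 |].
  - destruct (Hweight (- K) c t Hct) as [z [Hz Heq]].
    rewrite Hc0 in Heq.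
    assert (Hz' : E' z <= K * E z)
      by (pose proof (Rle_abs (E' z)); pose proof (Hbound z ltac:(lra)); lra).
    pose proof (exp_pos (- K * z)). pose proof (exp_pos (- K * t)).
    assert ((E' z + - K * E z) * exp (- K * z) <= 0) by nra.
    assert (E t * exp (- K * t) <= 0) by nra.
    nra.
  - destruct (Hweight K t c Htc) as [z [Hz Heq]].
    rewrite Hc0 in Heq.
    assert (Hz' : - E' z <= K * E z).
    { pose proof (Rle_abs (- E' z)). rewrite Rabs_Ropp in *.
      pose proof (Hbound z ltac:(lra)). lra. }
    pose proof (exp_pos (K * z)). pose proof (exp_pos (K * t)).
    assert (0 <= (E' z + K * E z) * exp (K * z)) by nra.
    assert (0 <= E t * exp (K * t)) by nra.
    nra.
Qed.

Lemma quadratic_form_eq0 al be ga G H :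
  0 < al -> 0 < be -> 0 <= ga -> 0 <= G * H ->
  al * (G * G) + be * (H * H) + ga * (G * H) = 0 -> G = 0 /\ H = 0.
Proof.
  intros Hal Hbe Hga HGH Heq.
  assert (0 <= al * (G * G)) by (apply Rmult_le_pos; nra).
  assert (0 <= be * (H * H)) by (apply Rmult_le_pos; nra).
  assert (0 <= ga * (G * H)) by (apply Rmult_le_pos; nra).
  assert (HG : G * G = 0) by (apply (Rmult_eq_reg_l al); lra).
  assert (HH : H * H = 0) by (apply (Rmult_eq_reg_l be); lra).
  split; nra.
Qed.

Lemma Rabs_quadratic_form_le al be ga G H :
  Rabs (al * (G * G) + be * (H * H) + ga * (G * H))
  <= (Rabs al + Rabs be + Rabs ga) * (G * G + H * H).
Proof.
  assert (HGH : Rabs (G * H) <= G * G + H * H).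
  { rewrite Rabs_mult.
    assert (Rabs G * Rabs G = G * G) by (rewrite <- Rabs_mult; apply Rabs_pos_eq; nra).
    assert (Rabs H * Rabs H = H * H) by (rewrite <- Rabs_mult; apply Rabs_pos_eq; nra).
    pose proof (Rabs_pos G). pose proof (Rabs_pos H). nra. }
  assert (HG : 0 <= G * G) by nra. assert (HH : 0 <= H * H) by nra.
  revert HGH HG HH. generalize (G * G) (H * H) (G * H). intros u v w Hw Hu Hv.
  pose proof (Rabs_triang (al * u + be * v) (ga * w)).
  pose proof (Rabs_triang (al * u) (be * v)).
  rewrite !Rabs_mult, (Rabs_pos_eq u), (Rabs_pos_eq v) in * by assumption.
  assert (Rabs ga * Rabs w <= Rabs ga * (u + v))
    by (apply Rmult_le_compat_l; [apply Rabs_pos | assumption]).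
  assert (0 <= Rabs al * v) by (apply Rmult_le_pos; [apply Rabs_pos | assumption]).
  assert (0 <= Rabs be * u) by (apply Rmult_le_pos; [apply Rabs_pos | assumption]).
  lra.
Qed.

Section Model.

Variables a b c k m : R.
Hypotheses (ha : 0 < a) (hb : 0 < b) (hc : 0 < c) (hk : 0 < k) (hm : 0 < m).

Definition growth_x (x y : R) : R := 1 - x - c * y.
Definition growth_y (x y : R) : R := 1 / (1 + k * x) - y - a * x - m * x * y.
Definition growth_y_dx (x y : R) : R := - (k / ((1 + k * x) * (1 + k * x))) - a - m * y.

Lemma growth_y_dx_neg x y : 0 < x -> 0 < y -> growth_y_dx x y < 0.
Proof.
  intros Hx Hy. unfold growth_y_dx.
  assert (0 < k / ((1 + k * x) * (1 + k * x))) by (apply Rdiv_lt_0_compat; nra).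
  nra.
Qed.

Lemma growth_y_dx_ge x y : 0 < x -> - (k + a + m * y) <= growth_y_dx x y.
Proof.
  intro Hx. unfold growth_y_dx.
  set (d := (1 + k * x) * (1 + k * x)).
  assert (1 <= d) by (unfold d; nra).
  assert (k / d * d = k) by (field; lra).
  assert (0 < k / d) by (apply Rdiv_lt_0_compat; lra).
  nra.
Qed.

Section Solution.

Variables x y : R -> R.
Hypothesis Hsol : is_solution a b c k m x y.
Hypothesis Hpos : in_open_quadrant x y.

Let G t := growth_x (x t) (y t).
Let H t := growth_y (x t) (y t).

Lemma derive_x t : derivable_pt_lim x t (b * x t * G t).
Proof. exact (proj1 (Hsol t)). Qed.

Lemma derive_y t : derivable_pt_lim y t (y t * H t).
Proof. exact (proj2 (Hsol t)). Qed.

Lemma derive_growth_x t :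
  derivable_pt_lim G t (- (b * x t * G t) - c * (y t * H t)).
Proof.
  pose proof (derive_x t) as Hx. pose proof (derive_y t) as Hy.
  apply is_derive_Reals in Hx, Hy. apply is_derive_Reals.
  unfold G, growth_x. auto_derive.
  - repeat split; eexists; eassumption.
  - erewrite (is_derive_unique (fun s => x s)), (is_derive_unique (fun s => y s)) by eassumption.
    unfold G, H, growth_x, growth_y. ring.
Qed.

Lemma derive_growth_y t :
  derivable_pt_lim H t
    (growth_y_dx (x t) (y t) * (b * x t * G t) - (1 + m * x t) * (y t * H t)).
Proof.
  pose proof (derive_x t) as Hx. pose proof (derive_y t) as Hy.
  destruct (Hpos t) as [Hx0 Hy0].
  apply is_derive_Reals in Hx, Hy. apply is_derive_Reals.
  unfold H, growth_y. auto_derive.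
  - repeat split; try (eexists; eassumption). nra.
  - erewrite (is_derive_unique (fun s => x s)), (is_derive_unique (fun s => y s)) by eassumption.
    unfold G, H, growth_x, growth_y, growth_y_dx. field. nra.
Qed.

Lemma derive_growth_product t :
  derivable_pt_lim (fun s => G s * H s) t
    (- ((- growth_y_dx (x t) (y t) * b * x t) * (G t * G t)
        + (c * y t) * (H t * H t)
        + (b * x t + (1 + m * x t) * y t) * (G t * H t))).
Proof.
  eapply derivable_pt_lim_eq_r.
  - exact (derivable_pt_lim_mult G H t _ _ (derive_growth_x t) (derive_growth_y t)).
  - ring.
Qed.

Let energy t := G t * G t + H t * H t.
Let energy_rate t :=
  (-2 * b * x t) * (G t * G t) + (-2 * (1 + m * x t) * y t) * (H t * H t)
  + (2 * (growth_y_dx (x t) (y t) * b * x t - c * y t)) * (G t * H t).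

Lemma derive_energy t : derivable_pt_lim energy t (energy_rate t).
Proof.
  eapply derivable_pt_lim_eq_r.
  - exact (derivable_pt_lim_plus _ _ t _ _
             (derivable_pt_lim_mult G G t _ _ (derive_growth_x t) (derive_growth_x t))
             (derivable_pt_lim_mult H H t _ _ (derive_growth_y t) (derive_growth_y t))).
  - unfold energy_rate. ring.
Qed.

Lemma energy_rate_bound t X Y : x t <= X -> y t <= Y ->
  Rabs (energy_rate t)
  <= 2 * (b * X + (1 + m * X) * Y + ((k + a + m * Y) * b * X + c * Y)) * energy t.
Proof.
  intros HX HY. destruct (Hpos t) as [Hx0 Hy0].
  pose proof (growth_y_dx_neg _ _ Hx0 Hy0). pose proof (growth_y_dx_ge (x t) (y t) Hx0).
  eapply Rle_trans; [apply Rabs_quadratic_form_le |].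
  unfold energy. apply Rmult_le_compat_r; [nra |].
  assert (0 < b * x t) by nra.
  assert (0 < (1 + m * x t) * y t) by (apply Rmult_lt_0_compat; nra).
  assert (b * x t <= b * X) by nra.
  assert ((1 + m * x t) * y t <= (1 + m * X) * Y) by (apply Rmult_le_compat; nra).
  rewrite (Rabs_left1 (-2 * b * x t)), (Rabs_left1 (-2 * (1 + m * x t) * y t))
    by nra.
  assert (Rabs (2 * (growth_y_dx (x t) (y t) * b * x t - c * y t))
          <= 2 * ((k + a + m * Y) * b * X + c * Y)).
  { assert (0 < - growth_y_dx (x t) (y t) * (b * x t)) by nra.
    assert (- growth_y_dx (x t) (y t) * (b * x t) <= (k + a + m * Y) * (b * X))
      by (apply Rmult_le_compat; nra).
    assert (0 < c * y t <= c * Y) by (split; nra).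
    apply Rabs_le. split; lra. }
  nra.
Qed.

Lemma solution_through_equilibrium_constant t0 :
  G t0 = 0 -> H t0 = 0 -> forall t, x t = x t0 /\ y t = y t0.
Proof.
  intros HG0 HH0 t.
  set (A := Rmin t0 t). set (B := Rmax t0 t).
  assert (Ht0 : A <= t0 <= B) by (split; [apply Rmin_l | apply Rmax_l]).
  assert (Ht : A <= t <= B) by (split; [apply Rmin_r | apply Rmax_r]).
  destruct (continuity_ab_maj x A B ltac:(lra)
              (fun s _ => derivable_pt_lim_continuity_pt _ _ _ (derive_x s)))
    as [sx [Hsx _]].
  destruct (continuity_ab_maj y A B ltac:(lra)
              (fun s _ => derivable_pt_lim_continuity_pt _ _ _ (derive_y s)))
    as [sy [Hsy _]].
  assert (Henergy : forall s, A <= s <= B -> energy s = 0).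
  { apply (gronwall_zero energy energy_rate
             (2 * (b * x sx + (1 + m * x sx) * y sy
                   + ((k + a + m * y sy) * b * x sx + c * y sy)))
             A B t0 derive_energy).
    - intro s. unfold energy. nra.
    - intros s Hs. apply energy_rate_bound; auto.
    - exact Ht0.
    - unfold energy. rewrite HG0, HH0. ring. }
  assert (Hrest : forall s, A <= s <= B -> G s = 0 /\ H s = 0).
  { intros s Hs. pose proof (Henergy s Hs). unfold energy in *. split; nra. }
  split; apply (eq_of_derivable_pt_lim_0 _ A B); try assumption;
    intros s Hs; destruct (Hrest s Hs) as [HGs HHs].
  - replace 0 with (b * x s * G s) by (rewrite HGs; ring). apply derive_x.
  - replace 0 with (y s * H s) by (rewrite HHs; ring). apply derive_y.
Qed.

Lemma periodic_solution_meets_equilibrium T :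
  0 < T -> (forall t, x (t + T) = x t /\ y (t + T) = y t) ->
  exists t0, G t0 = 0 /\ H t0 = 0.
Proof.
  intros HT Hper.
  destruct (periodic_max_critical x _ T HT (fun t => proj1 (Hper t)) derive_x)
    as [t1 [Ht1 [Hx1 _]]].
  assert (HG1 : G t1 = 0).
  { destruct (Hpos t1) as [Hx0 _].
    apply (Rmult_eq_reg_l (b * x t1)); [lra | nra]. }
  assert (HQper : forall t, G (t + T) * H (t + T) = G t * H t).
  { intro t. unfold G, H. rewrite (proj1 (Hper t)), (proj2 (Hper t)). reflexivity. }
  destruct (periodic_max_critical (fun s => G s * H s) _ T HT HQper derive_growth_product)
    as [t0 [_ [HQ' Hmax]]].
  exists t0. destruct (Hpos t0) as [Hx0 Hy0].
  pose proof (growth_y_dx_neg _ _ Hx0 Hy0).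
  pose proof (Hmax t1 Ht1) as HQ. rewrite HG1, Rmult_0_l in HQ.
  assert (Hbx : 0 < b * x t0) by nra.
  assert (Hmy : 0 < (1 + m * x t0) * y t0) by (apply Rmult_lt_0_compat; nra).
  apply (quadratic_form_eq0 (- growth_y_dx (x t0) (y t0) * b * x t0) (c * y t0)
           (b * x t0 + (1 + m * x t0) * y t0)); [nra | nra | lra | exact HQ | lra].
Qed.

End Solution.

End Model.

Theorem theorem6 (a b c k m : R)
  (ha : 0 < a) (hb : 0 < b) (hc : 0 < c) (hk : 0 < k) (hm : 0 < m) :
  forall x y : R -> R,
    is_closed_trajectory a b c k m x y -> ~ in_open_quadrant x y.
Proof.
  intros x y [Hsol [[T [HT Hper]] [t1 [t2 Hnonconst]]]] Hpos.
  destruct (periodic_solution_meets_equilibrium _ _ _ _ _ ha hb hc hk hm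
              _ _ Hsol Hpos _ HT Hper) as [t0 [HG HH]].
  pose proof (solution_through_equilibrium_constant _ _ _ _ _ ha hb hc hk hm
                _ _ Hsol Hpos t0 HG HH) as Hconst.
  destruct (Hconst t1), (Hconst t2). lra.
Qed.
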